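(* Consider the two-layer multi-item order fulfillment problem described in the context with time-invariant variable costs, any $K\ge 1$, and any given fixed costs $f_0\ge0$, $f_1,\dots,f_K>0$. Then every online fulfillment policy $\mathrm{ALG}$ (deterministic or randomized) satisfies \[\mathfrak R_{\mathrm{inv}}(\mathrm{ALG})\ge\frac{f_0+\sum_{k\in[K]}f_k}{\min_{k\in[K]}f_k}.\]
   Context: Problem. $n$ items, $K$ FDCs indexed $k\in[K]$, an RDC indexed $k=0$ with unlimited inventory. FDC $k$ initially holds $I_{k,0}^i\ge0$ units of item $i$, never replenished. In periods $t=1,\dots,T$ an order $\boldsymbol S_t=(S_t^i)_i$ of nonnegative integers arrives; the policy must immediately and irrevocably choose $m_{k,t}^i\ge0$ with $\sum_{k=0}^Km_{k,t}^i=S_t^i$ and $m_{k,t}^i\le I_{k,t-1}^i$ ($k\in[K]$), $I_{k,t}^i=I_{k,0}^i-\sum_{\tau\le t}m_{k,\tau}^i$. Period cost $\sum_{k=0}^K[f_k\mathbb{I}(\sum_im_{k,t}^i>0)+\sum_ic_{k,t}^im_{k,t}^i]$; total cost is the sum. An online policy (possibly randomized) decides in period $t$ using only fixed costs, initial inventories and orders/variable costs up to $t$. $\mathrm{ALG}(I)$: (expected) total cost on instance $I$; $\mathrm{OPT}(I)$: offline optimal total cost. $\mathfrak R_{\mathrm{inv}}(\mathrm{ALG})$ is the supremum of $\mathrm{ALG}(I)/\mathrm{OPT}(I)$ over all $n,T$, initial inventories, nonnegative time-invariant variable costs $c_{k,t}^i=c_k^i$ and order sequences. *)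

From HB Require Import structures.
From mathcomp Require Import all_boot all_order all_algebra.
From mathcomp Require Import all_classical all_reals all_analysis.
Set Implicit Arguments. Unset Strict Implicit. Unset Printing Implicit Defensive.
Import Order.TTheory GRing.Theory Num.Theory.
Local Open Scope ring_scope.
Local Open Scope classical_set_scope.

(* Sites are indexed by 'I_K.+1: ord0 is the RDC (index 0), and
   [lift ord0 k] (k : 'I_K) is FDC number k+1.  Items are 'I_n.  An allocation in one period is
   m : 'I_K.+1 -> 'I_n -> nat  (m site item).  A fulfillment plan over
   T periods is M : nat -> 'I_K.+1 -> 'I_n -> nat (period t = 0..T-1). *)

(* Feasibility of a plan for initial FDC inventories I0 and orders S
   (S = [:: S_1; ...; S_T]). *)
Definition feasible_plan (K n : nat) (I0 : 'I_K -> 'I_n -> nat)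
    (S : seq ('I_n -> nat)) (M : nat -> 'I_K.+1 -> 'I_n -> nat) : Prop :=
  forall t, (t < size S)%N ->
    (forall i : 'I_n, (\sum_(k < K.+1) M t k i)%N = nth (fun=> 0%N) S t i) /\
    (forall (k : 'I_K) (i : 'I_n),
        (M t (lift ord0 k) i <= I0 k i - \sum_(s < t) M s (lift ord0 k) i)%N).

Definition plan_cost (R : realType) (K n : nat) (f : 'I_K.+1 -> R)
    (c : 'I_K.+1 -> 'I_n -> R) (T : nat) (M : nat -> 'I_K.+1 -> 'I_n -> nat) : R :=
  \sum_(t < T) \sum_(k < K.+1)
     (f k * (if (0 < \sum_(i < n) M t k i)%N then 1 else 0)
      + \sum_(i < n) c k i * (M t k i)%:R).

Definition OPT (R : realType) (K n : nat) (f : 'I_K.+1 -> R)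
    (I0 : 'I_K -> 'I_n -> nat) (c : 'I_K.+1 -> 'I_n -> R)
    (S : seq ('I_n -> nat)) : R :=
  inf [set plan_cost f c (size S) M | M in [set M | feasible_plan I0 S M]].

(* A deterministic online policy: in each period it sees the number of items,
   the initial FDC inventories, the (time-invariant) variable costs and the
   orders received so far [:: S_1; ...; S_t], and outputs the allocation of
   period t.  (Fixed costs are fixed parameters, hence implicitly known.) *)
Definition policy (R : realType) (K : nat) :=
  forall n : nat, ('I_K -> 'I_n -> nat) -> ('I_K.+1 -> 'I_n -> R) ->
    seq ('I_n -> nat) -> 'I_K.+1 -> 'I_n -> nat.

Definition run (R : realType) (K : nat) (pol : policy R K) (n : nat)
    (I0 : 'I_K -> 'I_n -> nat) (c : 'I_K.+1 -> 'I_n -> R)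
    (S : seq ('I_n -> nat)) : nat -> 'I_K.+1 -> 'I_n -> nat :=
  fun t => pol n I0 c (take t.+1 S).

(* Expected cost of a randomized policy (a family of deterministic policies
   indexed by a random seed w drawn from the probability P). *)
Definition ALG (R : realType) (K : nat) (f : 'I_K.+1 -> R)
    (d : measure_display) (Omega : measurableType d) (P : probability Omega R)
    (pol : Omega -> policy R K) (n : nat) (I0 : 'I_K -> 'I_n -> nat)
    (c : 'I_K.+1 -> 'I_n -> R) (S : seq ('I_n -> nat)) : \bar R :=
  (\int[P]_w (plan_cost f c (size S) (run (pol w) I0 c S))%:E)%E.

From HB Require Import structures.
From mathcomp Require Import all_boot all_order all_algebra.
From mathcomp Require Import all_classical all_reals all_analysis.
Import Order.TTheory GRing.Theory Num.Theory.
Local Open Scope ring_scope.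
Local Open Scope classical_set_scope.
From mathcomp Require Import zify ring lra.
Set Implicit Arguments. Unset Strict Implicit. Unset Printing Implicit Defensive.

(* Fix a cheapest FDC ks, let F be the sum of all fixed costs and make every
   FDC free while the RDC charges F per unit.  In period s the adversary orders
   T units of an item (s, j) for every site j <> ks, stocked T times at ks and
   at j (or free at the RDC when j is the RDC), plus one unit of an anchor item
   only ks holds.  Serving a period from ks alone costs f ks, opening every site
   costs F.  Period s is declared bad when the policy's expected cost in it is
   at most F - th; the adversary then reorders one unit of every item (s, j) in
   each later period.  A site j avoided in a bad period s had batch (s, j) shipped
   by ks, which is thereby exhausted, so j must open in every later period: each
   site is avoided in at most one bad period.  Over nb bad periods the policy pays
   at least nb F - (F - f ks), and more than F - th in each good one, while the
   offline plan pays F per bad period and f ks per good one.  Since nb th is at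
   most F - f ks, the ratio tends to F / f ks as T grows. *)

(** * Plans and their costs *)

Definition opened (K n : nat) (m : 'I_K.+1 -> 'I_n -> nat) (k : 'I_K.+1) : bool :=
  (0 < \sum_(i < n) m k i)%N.

Definition period_cost (R : realType) (K n : nat) (f : 'I_K.+1 -> R)
    (c : 'I_K.+1 -> 'I_n -> R) (m : 'I_K.+1 -> 'I_n -> nat) : R :=
  \sum_(k < K.+1) (f k * (if opened m k then 1 else 0)
                   + \sum_(i < n) c k i * (m k i)%:R).

Lemma openedPn (K n : nat) (m : 'I_K.+1 -> 'I_n -> nat) (k : 'I_K.+1) :
  reflect (forall i, m k i = 0%N) (~~ opened m k).
Proof.
rewrite /opened -eqn0Ngt sum_nat_eq0.
by apply: (iffP forallP) => [m0 i|m0 i]; [exact/eqP/m0 | rewrite m0].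
Qed.

Lemma opened_pos (K n : nat) (m : 'I_K.+1 -> 'I_n -> nat) (k : 'I_K.+1) (i : 'I_n) :
  (0 < m k i)%N -> opened m k.
Proof. by apply: contraTT => /openedPn->. Qed.

Lemma ler_sum_subpred (R : numDomainType) (I : finType) (P Q : pred I) (F : I -> R) :
  (forall i, 0 <= F i) -> (forall i, P i -> Q i) ->
  \sum_(i | P i) F i <= \sum_(i | Q i) F i.
Proof.
move=> F_ge0 PQ; rewrite [X in X <= _]big_mkcond [X in _ <= X]big_mkcond /=.
by apply: ler_sum => i _; case: (boolP (P i)) => [/PQ->|_] //; case: ifP.
Qed.

Section PeriodCost.
Variables (R : realType) (K n : nat) (f : 'I_K.+1 -> R) (c : 'I_K.+1 -> 'I_n -> R).
Hypotheses (f_ge0 : forall k, 0 <= f k) (c_ge0 : forall k i, 0 <= c k i).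

Lemma plan_costE T M : plan_cost f c T M = \sum_(t < T) period_cost f c (M t).
Proof. by []. Qed.

Lemma period_costE m : period_cost f c m =
  \sum_(k | opened m k) f k + \sum_(k < K.+1) \sum_(i < n) c k i * (m k i)%:R.
Proof.
rewrite /period_cost big_split /= [X in _ = X + _]big_mkcond; congr (_ + _).
by apply: eq_bigr => k _; case: ifP; rewrite ?mulr1 ?mulr0.
Qed.

Lemma variable_cost_ge0 m : 0 <= \sum_(k < K.+1) \sum_(i < n) c k i * (m k i)%:R.
Proof. by do 2!apply: sumr_ge0 => ? _; rewrite mulr_ge0. Qed.

Lemma period_cost_ge_fixed m : \sum_(k | opened m k) f k <= period_cost f c m.
Proof. by rewrite period_costE lerDl variable_cost_ge0. Qed.

Lemma period_cost_ge0 m : 0 <= period_cost f c m.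
Proof. exact: le_trans (sumr_ge0 _ (fun k _ => f_ge0 k)) (period_cost_ge_fixed m). Qed.

Lemma period_cost_ge_var m k i : c k i * (m k i)%:R <= period_cost f c m.
Proof.
have var_ge : c k i * (m k i)%:R <= \sum_(k < K.+1) \sum_(i < n) c k i * (m k i)%:R.
  rewrite (bigD1 k) //= (bigD1 i) //= -addrA lerDl addr_ge0 //.
    by apply: sumr_ge0 => ? _; rewrite mulr_ge0.
  by apply: sumr_ge0 => ? _; apply: sumr_ge0 => ? _; rewrite mulr_ge0.
by rewrite period_costE (le_trans var_ge) // lerDr sumr_ge0.
Qed.

End PeriodCost.

Section Feasibility.
Variables (K n : nat) (I0 : 'I_K -> 'I_n -> nat) (S : seq ('I_n -> nat)).
Variables (M : nat -> 'I_K.+1 -> 'I_n -> nat) (M_feas : feasible_plan I0 S M).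

Lemma feasible_demand t i : (t < size S)%N ->
  (\sum_(k < K.+1) M t k i)%N = nth (fun=> 0%N) S t i.
Proof. by move=> /M_feas[]. Qed.

Lemma feasible_exhausted t k i : (t < size S)%N ->
  (I0 k i <= \sum_(s < t) M s (lift ord0 k) i)%N -> M t (lift ord0 k) i = 0%N.
Proof. by move=> /M_feas[_ /(_ k i)] stock used; lia. Qed.

Lemma feasible_unstocked t k i : (t < size S)%N -> I0 k i = 0%N ->
  M t (lift ord0 k) i = 0%N.
Proof. by move=> tS I0_0; apply: feasible_exhausted; rewrite ?I0_0. Qed.

End Feasibility.

Lemma feasible_plan_cumulative (K n : nat) (I0 : 'I_K -> 'I_n -> nat) (S : seq ('I_n -> nat))
    (M : nat -> 'I_K.+1 -> 'I_n -> nat) :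
  (forall t i, (t < size S)%N -> (\sum_(k < K.+1) M t k i)%N = nth (fun=> 0%N) S t i) ->
  (forall t k i, (t < size S)%N -> (\sum_(s < t.+1) M s (lift ord0 k) i <= I0 k i)%N) ->
  feasible_plan I0 S M.
Proof.
move=> demand stock t tS; split=> [i|k i]; first exact: demand.
by have := stock t k i tS; rewrite big_ord_recr /=; lia.
Qed.

Section OptimalCost.
Variables (R : realType) (K n : nat) (f : 'I_K.+1 -> R) (c : 'I_K.+1 -> 'I_n -> R).
Hypotheses (f_ge0 : forall k, 0 <= f k) (c_ge0 : forall k i, 0 <= c k i).

Lemma plan_costs_lbound I0 S :
  lbound [set plan_cost f c (size S) M | M in [set M | feasible_plan I0 S M]] 0.
Proof.
move=> _ [M _ <-]; rewrite plan_costE.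
by apply: sumr_ge0 => t _; exact: period_cost_ge0.
Qed.

Lemma OPT_ge0 I0 S M : feasible_plan I0 S M -> 0 <= OPT f I0 c S.
Proof.
move=> M_feas; apply: lb_le_inf; last exact: plan_costs_lbound.
by exists (plan_cost f c (size S) M), M.
Qed.

Lemma OPT_le_plan_cost I0 S M : feasible_plan I0 S M ->
  OPT f I0 c S <= plan_cost f c (size S) M.
Proof. by move=> M_feas; apply: ge_inf; [exists 0; exact: plan_costs_lbound | exists M]. Qed.

End OptimalCost.

Lemma plan_cost_run_take (R : realType) (K : nat) (f : 'I_K.+1 -> R) (pol : policy R K)
    (n : nat) (I0 : 'I_K -> 'I_n -> nat) (c : 'I_K.+1 -> 'I_n -> R)
    (S : seq ('I_n -> nat)) (m : nat) : (m <= size S)%N ->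
  plan_cost f c (size (take m S)) (run pol I0 c (take m S))
  = \sum_(t < m) period_cost f c (run pol I0 c S t).
Proof.
move=> mS; rewrite plan_costE size_takel //.
by apply: eq_bigr => t _; rewrite /run take_takel.
Qed.

Section Expectation.
Variables (R : realType) (d : measure_display) (Omega : measurableType d).
Variable (P : probability Omega R).

Lemma sum_expectation_ge (T : nat) (F : 'I_T -> Omega -> R) (B : pred 'I_T) (L : R) :
  (forall t, measurable_fun setT (F t)) -> (forall t w, 0 <= F t w) ->
  (forall w, L <= \sum_(t < T | B t) F t w) ->
  (L%:E <= \sum_(t < T | B t) \int[P]_w (F t w)%:E)%E.
Proof.
move=> F_meas F_ge0 F_sum.
have int_sum : (\sum_(t < T | B t) \int[P]_w (F t w)%:E
               = \int[P]_w (\sum_(t < T | B t) F t w)%:E)%E.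
  under [RHS]eq_integral => w _ do rewrite -sumEFin -big_filter.
  rewrite ge0_integral_sum ?big_filter // => [t|t w _].
    exact/measurable_realfun.measurable_EFinP/F_meas.
  by rewrite lee_fin.
case: (leP L 0) => [L_le0|L_gt0].
  apply: (@le_trans _ _ 0%E); first by rewrite lee_fin.
  by apply: sume_ge0 => t _; apply: integral_ge0 => w _; rewrite lee_fin.
rewrite int_sum -[X in (X <= _)%E]mule1 -(probability_setT P) -integral_cst //.
apply: ge0_le_integral => //= [w _||w _]; rewrite ?lee_fin ?F_sum ?ltW //.
apply/measurable_realfun.measurable_EFinP.
under eq_fun do rewrite -big_filter.
exact: measurable_sum.
Qed.

Variables (K : nat) (f : 'I_K.+1 -> R) (pol : Omega -> policy R K).
Variables (n : nat) (I0 : 'I_K -> 'I_n -> nat) (c : 'I_K.+1 -> 'I_n -> R).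
Hypotheses (f_ge0 : forall k, 0 <= f k) (c_ge0 : forall k i, 0 <= c k i).
Hypothesis plan_cost_meas : forall S : seq ('I_n -> nat),
  measurable_fun setT (fun w => plan_cost f c (size S) (run (pol w) I0 c S)).

Lemma measurable_period_cost (S : seq ('I_n -> nat)) (t : nat) : (t < size S)%N ->
  measurable_fun setT (fun w => period_cost f c (run (pol w) I0 c S t)).
Proof.
move=> tS.
have -> : (fun w => period_cost f c (run (pol w) I0 c S t)) =
    (fun w => plan_cost f c (size (take t.+1 S)) (run (pol w) I0 c (take t.+1 S))
            - plan_cost f c (size (take t S)) (run (pol w) I0 c (take t S))).
  apply: funext => w; rewrite !plan_cost_run_take ?(ltnW tS) //.
  by rewrite big_ord_recr /= addrC addrK.
exact: measurable_realfun.measurable_funB (plan_cost_meas _) (plan_cost_meas _).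
Qed.

Lemma ALG_sum_periods (S : seq ('I_n -> nat)) :
  ALG f P pol I0 c S =
  (\sum_(t < size S) \int[P]_w (period_cost f c (run (pol w) I0 c S t))%:E)%E.
Proof.
rewrite /ALG; under eq_integral => w _ do rewrite plan_costE -sumEFin.
rewrite ge0_integral_sum // => [t|t w _].
  exact/measurable_realfun.measurable_EFinP/measurable_period_cost.
by rewrite lee_fin period_cost_ge0.
Qed.

End Expectation.

Section Adaptive.
Variable choose : seq bool -> bool.

Fixpoint adaptive (n : nat) : seq bool :=
  if n is n'.+1 then rcons (adaptive n') (choose (adaptive n')) else [::].

Lemma size_adaptive n : size (adaptive n) = n.
Proof. by elim: n => //= n IHn; rewrite size_rcons IHn. Qed.

Lemma take_adaptive m n : (m <= n)%N -> take m (adaptive n) = adaptive m.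
Proof.
elim: n => [|n IHn]; first by rewrite leqn0 => /eqP->.
rewrite leq_eqVlt => /orP[/eqP-> | mn]; first by rewrite take_oversize ?size_adaptive.
by rewrite /= -cats1 takel_cat ?size_adaptive // IHn.
Qed.

Lemma nth_adaptive t n : (t < n)%N -> nth false (adaptive n) t = choose (adaptive t).
Proof.
move=> tn; rewrite -(nth_take _ (ltnSn t)) take_adaptive //=.
by rewrite nth_rcons size_adaptive ltnn eqxx.
Qed.

End Adaptive.

Lemma card_once_le1 (T : nat) (B : {pred 'I_T}) (Q : pred 'I_T) :
  (forall s t : 'I_T, s \in B -> t \in B -> (s < t)%N -> Q s -> ~~ Q t) ->
  (#|[pred t in B | Q t]| <= 1)%N.
Proof.
move=> once; apply/card_le1_eqP => s t; rewrite !inE => /andP[sB Qs] /andP[tB Qt].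
case: (ltngtP s t) => [st|ts|/val_inj//].
  by move: (once s t sB tB st Qs); rewrite Qt.
by move: (once t s tB sB ts Qt); rewrite Qs.
Qed.

Lemma sum_once_le (R : numDomainType) (I : finType) (T : nat) (f : I -> R)
    (B : {pred 'I_T}) (A : 'I_T -> pred I) (i0 : I) :
  (forall i, 0 <= f i) -> (forall t, ~~ A t i0) ->
  (forall i (s t : 'I_T), s \in B -> t \in B -> (s < t)%N -> A s i -> ~~ A t i) ->
  \sum_(t in B) \sum_(i | A t i) f i <= \sum_(i | i != i0) f i.
Proof.
move=> f_ge0 never once.
under eq_bigr => t _ do rewrite big_mkcond /=.
rewrite exchange_big [X in _ <= X]big_mkcond /=; apply: ler_sum => i _.
case: eqP => [->|_]; first by rewrite big1 // => t _; rewrite (negPf (never t)).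
rewrite -big_mkcondr /= sumr_const -mulr_natr ler_piMr // -[1]/(1%:R) ler_nat.
by apply: card_once_le1 => s t sB tB st; apply: once.
Qed.

Lemma threshold_split (R : realType) (T : nat) (a : 'I_T -> \bar R) (B : {pred 'I_T})
    (thr L : R) :
  (forall t, (t \in B) = (a t <= thr%:E)%E) ->
  (L%:E <= \sum_(t in B) a t)%E ->
  L <= #|B|%:R * thr /\ ((L + #|[predC B]|%:R * thr)%:E <= \sum_(t < T) a t)%E.
Proof.
move=> BE L_le.
have sum_B : (\sum_(t in B) a t <= (#|B|%:R * thr)%:E)%E.
  apply: (@le_trans _ _ (\sum_(t in B) thr%:E)%E); first by apply: lee_sum => t; rewrite BE.
  by rewrite sumEFin sumr_const mulr_natl.
have sum_notB : ((#|[predC B]|%:R * thr)%:E <= \sum_(t in [predC B]) a t)%E.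
  apply: (@le_trans _ _ (\sum_(t in [predC B]) thr%:E)%E).
    by rewrite sumEFin sumr_const mulr_natl.
  by apply: lee_sum => t; rewrite inE BE -ltNge => /ltW.
split; first by rewrite -lee_fin (le_trans L_le).
by rewrite (bigID (mem B)) /= EFinD leeD.
Qed.

Lemma sum_ord_le_card (n : nat) (F : 'I_n -> nat) :
  (forall u, F u <= 1)%N -> (\sum_(u < n) F u <= n)%N.
Proof.
move=> F_le1; rewrite -[X in (_ <= X)%N]card_ord -sum1_card.
by apply: leq_sum => u _.
Qed.

Lemma sum_ord_single_le (n b s : nat) (F : 'I_n -> nat) :
  (forall u : 'I_n, u != s :> nat -> F u = 0%N) -> (forall u : 'I_n, u = s :> nat -> F u <= b)%N ->
  (\sum_(u < n) F u <= b)%N.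
Proof.
move=> F0 Fs_le; case: (ltnP s n) => [sn|ns].
  rewrite (bigD1 (Ordinal sn)) //= big1 ?addn0; first exact: Fs_le.
  by move=> u us; apply: F0; rewrite -(inj_eq (@ord_inj n)) in us.
by rewrite big1 // => u _; apply: F0; rewrite neq_ltn (leq_trans (ltn_ord u)).
Qed.

Lemma competitive_gap (R : archiRealFieldType) (F fm r : R) :
  0 < fm -> fm <= F -> r < F / fm ->
  exists (thr : R) (T : nat), forall nb ng : nat, (nb + ng)%N = T ->
    nb%:R * F - (F - fm) <= nb%:R * thr ->
    forall O, 0 <= O -> O <= nb%:R * F + ng%:R * fm ->
    r * O < nb%:R * F - (F - fm) + ng%:R * thr.
Proof.
move=> fm_gt0 fm_le r_lt.
pose rho := Num.max r 0.
have rho_ge0 : 0 <= rho by rewrite le_max lexx orbT.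
have r_le : r <= rho by rewrite le_max lexx.
have rho_lt : rho * fm < F.
  by rewrite -ltr_pdivlMr // gt_max r_lt divr_gt0 // (lt_le_trans fm_gt0).
pose th := (F - rho * fm) / 2.
have th_gt0 : 0 < th by rewrite divr_gt0 // subr_gt0.
have rho_fm : rho * fm = F - 2 * th by rewrite /th; field.
pose G := F - fm.
have G_ge0 : 0 <= G by rewrite subr_ge0.
exists (F - th), (Num.truncn ((G + rho * G * G / th) / th)).+1.
move=> nb ng nbng nb_le O O_ge0 O_le.
have T_big : G + rho * G * G / th < (nb + ng)%:R * th.
  by rewrite -ltr_pdivrMr // nbng truncnS_gt.
have nb_th : nb%:R * th <= G by move: nb_le; rewrite /G mulrBr; lra.
have nb_G : rho * nb%:R * G <= rho * G * G / th.
  have nb_le' : nb%:R <= G / th by rewrite ler_pdivlMr.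
  have rhoG_ge0 : 0 <= rho * G by rewrite mulr_ge0.
  nra.
apply: le_lt_trans (ler_wpM2r O_ge0 r_le) _.
apply: le_lt_trans (ler_wpM2l rho_ge0 O_le) _.
have -> : rho * (nb%:R * F + ng%:R * fm) = rho * nb%:R * G + (nb + ng)%:R * (rho * fm).
  by rewrite /G; ring.
have nb_th_ge0 : 0 <= nb%:R * th by rewrite mulr_ge0 // ltW.
rewrite rho_fm -/G; rewrite natrD in T_big *; lra.
Qed.

(** * The hard instance *)

Section HardInstance.
Variables (K T : nat) (kst : 'I_K).
Local Notation ks := (lift ord0 kst).

(* [None] is the anchor item; [Some (s, j)] is the item ordered in bulk in
   period [s] and tied to site [j]. *)
Definition hard_item := option ('I_T * 'I_K.+1)%type.
Definition n_items := #|{: hard_item}|.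
Definition item_of (i : 'I_n_items) : hard_item := enum_val i.
Definition item_idx (x : hard_item) : 'I_n_items := enum_rank x.

Lemma item_idxK : cancel item_idx item_of.
Proof. exact: enum_rankK. Qed.

Definition tied (j : 'I_K.+1) (i : 'I_n_items) : bool :=
  if item_of i is Some (_, j') then j' == j else false.

Lemma tied_liftN (k : 'I_K) (i : 'I_n_items) : tied (lift ord0 k) i -> ~~ tied ord0 i.
Proof. by rewrite /tied; case: item_of => [[_ j] /eqP->|//]; rewrite eq_sym neq_lift. Qed.

Definition hard_cost (R : realType) (p : R) (k : 'I_K.+1) (i : 'I_n_items) : R :=
  if (k == ord0) && ~~ tied ord0 i then p else 0.

Lemma hard_cost_ge0 (R : realType) (p : R) k i : 0 <= p -> 0 <= hard_cost p k i.
Proof. by rewrite /hard_cost; case: ifP. Qed.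

Definition hard_stock (k : 'I_K) (i : 'I_n_items) : nat :=
  if (k == kst) || tied (lift ord0 k) i then T else 0.

Definition hard_order (bs : seq bool) (u : nat) (i : 'I_n_items) : nat :=
  if item_of i is Some (s, j) then
    if j == ks then 0 else if s == u :> nat then T
    else if (s < u)%N && nth false bs s then 1 else 0
  else 1.

Definition hard_orders (bs : seq bool) : seq ('I_n_items -> nat) := mkseq (hard_order bs) T.

Lemma hard_order_take bs u : hard_order (take u bs) u = hard_order bs u.
Proof.
apply: funext => i; rewrite /hard_order; case: item_of => [[s j]|] //.
by case: ltnP => //= su; rewrite nth_take.
Qed.

Definition avoids (m : 'I_K.+1 -> 'I_n_items -> nat) (j : 'I_K.+1) : bool :=
  [&& j != ks, ~~ opened m j & [forall i, tied j i ==> (m ord0 i == 0%N)]].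

Section FeasiblePlans.
Variables (bs : seq bool) (M : nat -> 'I_K.+1 -> 'I_n_items -> nat).
Hypothesis M_feas : feasible_plan hard_stock (hard_orders bs) M.

Lemma hard_demand t i : (t < T)%N -> (\sum_(k < K.+1) M t k i)%N = hard_order bs t i.
Proof. by move=> tT; rewrite (feasible_demand M_feas) ?size_mkseq ?nth_mkseq. Qed.

Lemma hard_unstocked t k i : (t < T)%N -> k != kst -> ~~ tied (lift ord0 k) i ->
  M t (lift ord0 k) i = 0%N.
Proof.
move=> tT k_kst not_tied; apply: (feasible_unstocked M_feas); rewrite ?size_mkseq //.
by rewrite /hard_stock (negPf k_kst) (negPf not_tied).
Qed.

Lemma opened_unless_avoided t k : (t < T)%N ->
  (forall i, ~~ tied ord0 i -> M t ord0 i = 0%N) -> ~~ avoids (M t) k -> opened (M t) k.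
Proof.
move=> tT rdc_cheap; case: (eqVneq k ks) => [-> _ | k_ks].
  pose anchor := item_idx None.
  apply: (@opened_pos _ _ _ _ anchor); move: (hard_demand anchor tT).
  rewrite /hard_order item_idxK (bigD1 ks) //= big1 ?addn0 => [->//|k' k'_ks].
  have not_tied j : ~~ tied j anchor by rewrite /tied item_idxK.
  case: (unliftP ord0 k') k'_ks => [k1 ->|->] k1_ks; last exact: rdc_cheap.
  by apply: hard_unstocked; rewrite // -(inj_eq (@lift_inj _ ord0)).
rewrite /avoids k_ks /= negb_and negbK => /orP[// | /forallPn[i]].
rewrite negb_imply => /andP[tied_k rdc_i].
case: (unliftP ord0 k) tied_k => [k1 ->|-> _]; last by rewrite (@opened_pos _ _ _ _ i) // lt0n.
by move/tied_liftN/rdc_cheap/eqP; rewrite (negPf rdc_i).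
Qed.

Lemma hard_period_cost_ge (R : realType) (f : 'I_K.+1 -> R) t :
  (forall k, 0 <= f k) -> (t < T)%N ->
  \sum_(k | ~~ avoids (M t) k) f k <= period_cost f (hard_cost (\sum_(k < K.+1) f k)) (M t).
Proof.
set F := \sum_(k < K.+1) f k => f_ge0 tT.
have F_ge0 : 0 <= F by exact: sumr_ge0.
have c_ge0 k i : 0 <= hard_cost F k i by exact: hard_cost_ge0.
case: (boolP [exists i, ~~ tied ord0 i && (0 < M t ord0 i)%N]).
  case/existsP=> i /andP[costly shipped].
  have F_le : F <= hard_cost F ord0 i * (M t ord0 i)%:R.
    by rewrite /hard_cost eqxx costly ler_peMr // ler1n.
  apply: le_trans (le_trans F_le (period_cost_ge_var f_ge0 c_ge0 (M t) ord0 i)).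
  exact: ler_sum_subpred.
move=> /existsPn cheap.
apply: le_trans (period_cost_ge_fixed f c_ge0 (M t)); apply: ler_sum_subpred => // k.
apply: opened_unless_avoided => // i costly.
by apply/eqP; move: (cheap i); rewrite costly /= -eqn0Ngt.
Qed.

Lemma avoided_supply t (s : 'I_T) j : (t < T)%N -> avoids (M t) j ->
  (\sum_(k < K.+1) M t k (item_idx (Some (s, j))))%N = M t ks (item_idx (Some (s, j))).
Proof.
set g := item_idx _; move=> tT /and3P[j_ks /openedPn closed_j /forallP rdc_j].
rewrite (bigD1 ks) //= big1 ?addn0 // => k k_ks.
have [->|k_j] := eqVneq k j; first exact: closed_j.
case: (unliftP ord0 k) k_ks k_j => [k1 ->|->] k_ks k_j.
  apply: hard_unstocked; first by [].
    by rewrite -(inj_eq (@lift_inj _ ord0)).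
  by rewrite /tied item_idxK eq_sym.
by apply/eqP; move: (rdc_j g); rewrite /tied item_idxK eqxx.
Qed.

Lemma avoids_once (s t : 'I_T) j : (s < t)%N -> nth false bs s ->
  avoids (M s) j -> ~~ avoids (M t) j.
Proof.
move=> st bad_s avoid_s; apply/negP => avoid_t.
have j_ks : j != ks by case/and3P: avoid_s.
pose g := item_idx (Some (s, j)).
have used_s : M s ks g = T.
  by rewrite -avoided_supply // hard_demand // /hard_order item_idxK (negPf j_ks) eqxx.
have empty_t : M t ks g = 0%N.
  apply: (feasible_exhausted M_feas); first by rewrite size_mkseq.
  by rewrite /hard_stock eqxx (bigD1 (Ordinal st)) //= used_s leq_addr.
move: (hard_demand g (ltn_ord t)); rewrite avoided_supply // empty_t.
by rewrite /hard_order item_idxK (negPf j_ks) (ltn_eqF st) st bad_s.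
Qed.

Lemma bad_periods_cost_ge (R : realType) (f : 'I_K.+1 -> R)
    (B := [pred t : 'I_T | nth false bs t]) : (forall k, 0 <= f k) ->
  #|B|%:R * \sum_(k < K.+1) f k - (\sum_(k < K.+1) f k - f ks)
  <= \sum_(t in B) period_cost f (hard_cost (\sum_(k < K.+1) f k)) (M t).
Proof.
set F := \sum_(k < K.+1) f k => f_ge0.
have -> : F - f ks = \sum_(k | k != ks) f k by rewrite /F (bigD1 ks) //= addrC addrK.
have never_ks t : ~~ avoids (M t) ks by rewrite /avoids eqxx.
have once k (s t : 'I_T) : s \in B -> t \in B -> (s < t)%N ->
    avoids (M s) k -> ~~ avoids (M t) k.
  by rewrite inE => bad_s _ st; apply: avoids_once.
apply: le_trans (_ : _ <= \sum_(t in B) (F - \sum_(k | avoids (M t) k) f k)) _.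
  rewrite sumrB sumr_const mulr_natl lerD2l lerN2.
  exact: (sum_once_le f_ge0 never_ks once).
apply: ler_sum => t _; rewrite {1}/F (bigID (avoids (M t))) /= addrC addrK.
exact: hard_period_cost_ge.
Qed.

End FeasiblePlans.

Section OfflinePlan.
Variable bs : seq bool.

Definition offline_source (t : nat) (i : 'I_n_items) : 'I_K.+1 :=
  if item_of i is Some (s, j) then
    if (s == t :> nat) && nth false bs s then j else ks
  else ks.

Definition offline_plan (t : nat) (k : 'I_K.+1) (i : 'I_n_items) : nat :=
  if k == offline_source t i then hard_order bs t i else 0.

(* Each unit is shipped from a single source.  ks ships one anchor unit per
   period and, of item (s, j), either the batch (s good) or one unit per period
   after s (s bad): never more than its stock T. *)
Lemma offline_plan_feasible : feasible_plan hard_stock (hard_orders bs) offline_plan.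
Proof.
apply: feasible_plan_cumulative => [t i | t k i]; rewrite size_mkseq => tT.
  by rewrite nth_mkseq // /offline_plan -big_mkcond big_pred1_eq.
rewrite /offline_plan /offline_source /hard_stock /hard_order /tied.
case: item_of => [[s j]|]; last first.
  case: eqP => [/lift_inj-> | _]; last by rewrite big1.
  by rewrite eqxx /= sum_nat_const card_ord muln1.
case: (eqVneq j ks) => [_|j_ks]; first by rewrite big1 // => u _; case: ifP.
case: (eqVneq (lift ord0 k) j) => [kj|k_j].
  rewrite kj orbT; apply: (@sum_ord_single_le _ _ s) => u us.
    by rewrite eq_sym in us; rewrite (negPf us) /= (negPf j_ks).
  by rewrite us eqxx; case: ifP.
case: (eqVneq k kst) => [->|k_kst]; last first.
  rewrite big1 // => u _; case: ifP => // /eqP; case: ifP => _ k_src.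
    by rewrite k_src eqxx in k_j.
  by move/lift_inj/eqP: k_src; rewrite (negPf k_kst).
rewrite /=; case: (boolP (nth false bs s)) => [bad|good].
  apply: leq_trans (sum_ord_le_card _) tT => u; rewrite andbT.
  by case: (s == u :> nat) => /=; [rewrite eq_sym (negPf j_ks) | rewrite eqxx; case: ifP].
apply: (@sum_ord_single_le _ _ s) => u us; rewrite andbF eqxx.
  by rewrite eq_sym in us; rewrite (negPf us) andbF.
by rewrite us eqxx.
Qed.

Lemma offline_variable_cost (R : realType) (p : R) t k i :
  hard_cost p k i * (offline_plan t k i)%:R = 0.
Proof.
rewrite /hard_cost; case: andP => [[/eqP-> untied] | _]; last by rewrite mul0r.
rewrite /offline_plan; suff -> : (ord0 == offline_source t i) = false by rewrite mulr0.
move: untied; rewrite /offline_source /tied.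
case: item_of => [[s j]|] => [untied|_]; last by rewrite (negPf (neq_lift _ _)).
by case: ifP => _; rewrite eq_sym ?(negPf untied) // eq_sym (negPf (neq_lift _ _)).
Qed.

Lemma offline_opened_good t k : ~~ nth false bs t -> opened (offline_plan t) k -> k = ks.
Proof.
move=> good; apply: contraTeq => k_ks; apply/openedPn => i.
rewrite /offline_plan; suff -> : offline_source t i = ks by rewrite (negPf k_ks).
by rewrite /offline_source; case: item_of => [[s j]|] //; case: eqP => // ->; rewrite (negPf good).
Qed.

Lemma offline_period_cost (R : realType) (f : 'I_K.+1 -> R) t : (forall k, 0 <= f k) ->
  period_cost f (hard_cost (\sum_(k < K.+1) f k)) (offline_plan t)
  <= if nth false bs t then \sum_(k < K.+1) f k else f ks.
Proof.
move=> f_ge0; rewrite period_costE [X in _ + X]big1 ?addr0 => [|k _]; last first.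
  by rewrite big1 // => i _; exact: offline_variable_cost.
case: ifP => [_|/negbT good]; first exact: ler_sum_subpred.
have -> : f ks = \sum_(k | k == ks) f k by rewrite big_pred1_eq.
apply: ler_sum_subpred => // k.
by move/(offline_opened_good good)->.
Qed.

Lemma OPT_hard_le (R : realType) (f : 'I_K.+1 -> R) (B := [pred t : 'I_T | nth false bs t]) :
  (forall k, 0 <= f k) ->
  OPT f hard_stock (hard_cost (\sum_(k < K.+1) f k)) (hard_orders bs)
  <= #|B|%:R * \sum_(k < K.+1) f k + #|[predC B]|%:R * f ks.
Proof.
move=> f_ge0.
have c_ge0 (k : 'I_K.+1) (i : 'I_n_items) : 0 <= hard_cost (\sum_(k < K.+1) f k) k i.
  by apply: hard_cost_ge0; exact: sumr_ge0.
apply: le_trans (OPT_le_plan_cost f_ge0 c_ge0 offline_plan_feasible) _.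
rewrite plan_costE size_mkseq (bigID (mem B)) /=; apply: lerD.
  apply: le_trans (_ : _ <= \sum_(t in B) \sum_(k < K.+1) f k) _.
    apply: ler_sum => t; rewrite inE => bad.
    by move: (offline_period_cost t f_ge0); rewrite bad.
  by rewrite sumr_const mulr_natl.
apply: le_trans (_ : _ <= \sum_(t in [predC B]) f ks) _.
  apply: ler_sum => t; rewrite !inE => /negPf good.
  by move: (offline_period_cost t f_ge0); rewrite good.
by rewrite sumr_const mulr_natl.
Qed.

End OfflinePlan.

End HardInstance.

(** * The adaptive adversary *)

Section Adversary.
Variables (R : realType) (K : nat) (f : 'I_K.+1 -> R) (kst : 'I_K).
Variables (d : measure_display) (Omega : measurableType d) (P : probability Omega R).
Variables (pol : Omega -> policy R K) (T : nat) (thr : R).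
Local Notation ks := (lift ord0 kst).
Local Notation F := (\sum_(k < K.+1) f k).
Local Notation c := (@hard_cost K T R F).
Local Notation I0 := (@hard_stock K T kst).

Definition expected_period_cost (S : seq ('I_(n_items K T) -> nat)) (t : nat) : \bar R :=
  (\int[P]_w (period_cost f c (run (pol w) I0 c S t))%:E)%E.

(* The expected cost of period t only depends on the orders of periods 0..t,
   hence on the flags of periods before t, so the flags can be chosen one by one. *)
Definition adversary_flags : seq bool :=
  adaptive (fun bs => `[< (expected_period_cost (mkseq (hard_order kst bs) (size bs).+1)
                                                 (size bs) <= thr%:E)%E >]) T.

Definition adversary_orders := hard_orders T kst adversary_flags.

Lemma mkseq_hard_order_adaptive (ch : seq bool -> bool) n m : (m <= n.+1)%N ->
  mkseq (hard_order (T:=T) kst (adaptive ch n)) m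
  = mkseq (fun u => hard_order kst (adaptive ch u) u) m.
Proof.
move=> mn; apply/eq_in_map => u; rewrite mem_iota add0n => /andP[_ um].
by rewrite -hard_order_take take_adaptive // -ltnS (leq_trans um).
Qed.

Lemma adversary_flagsE (t : 'I_T) :
  nth false adversary_flags t = (expected_period_cost adversary_orders t <= thr%:E)%E.
Proof.
have take_mkseq (g : nat -> 'I_(n_items K T) -> nat) : take t.+1 (mkseq g T) = mkseq g t.+1.
  by rewrite /mkseq -map_take take_iota (minn_idPl (ltn_ord t)).
rewrite nth_adaptive // size_adaptive asboolb; congr (_ <= _)%E.
apply: eq_integral => w _; rewrite /run take_oversize ?size_mkseq //.
rewrite /adversary_orders /hard_orders /adversary_flags take_mkseq.
by rewrite !mkseq_hard_order_adaptive // leqW.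
Qed.

Hypothesis f_ge0 : forall k, 0 <= f k.
Hypothesis pol_feasible : forall w S, feasible_plan I0 S (run (pol w) I0 c S).
Hypothesis pol_measurable : forall S : seq ('I_(n_items K T) -> nat),
  measurable_fun setT (fun w => plan_cost f c (size S) (run (pol w) I0 c S)).

Lemma adversary_cost_bounds (B := [pred t : 'I_T | nth false adversary_flags t]) :
  #|B|%:R * F - (F - f ks) <= #|B|%:R * thr /\
  (((#|B|%:R * F - (F - f ks)) + #|[predC B]|%:R * thr)%:E
     <= ALG f P pol I0 c adversary_orders)%E.
Proof.
have c_ge0 k i : 0 <= c k i by apply: hard_cost_ge0; exact: sumr_ge0.
rewrite (ALG_sum_periods P f_ge0 c_ge0 pol_measurable) size_mkseq.
apply: threshold_split => [t|]; first by rewrite inE adversary_flagsE.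
apply: sum_expectation_ge => [t|t w|w].
- by apply: (measurable_period_cost pol_measurable); rewrite size_mkseq.
- exact: period_cost_ge0.
- exact: (bad_periods_cost_ge (@pol_feasible w adversary_orders) f_ge0).
Qed.

End Adversary.

Theorem theorem4 (R : realType) (K : nat) (hK : (0 < K)%N)
  (f : 'I_K.+1 -> R) (hf0 : 0 <= f ord0)
  (hf : forall k : 'I_K, 0 < f (lift ord0 k))
  (d : measure_display) (Omega : measurableType d) (P : probability Omega R)
  (pol : Omega -> policy R K)
  (hvalid : forall (w : Omega) (n : nat) (I0 : 'I_K -> 'I_n -> nat)
     (c : 'I_K.+1 -> 'I_n -> R) (S : seq ('I_n -> nat)),
     (forall k i, 0 <= c k i) -> feasible_plan I0 S (run (pol w) I0 c S))
  (hmeas : forall (n : nat) (I0 : 'I_K -> 'I_n -> nat)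
     (c : 'I_K.+1 -> 'I_n -> R) (S : seq ('I_n -> nat)),
     (forall k i, 0 <= c k i) ->
     measurable_fun setT (fun w => plan_cost f c (size S) (run (pol w) I0 c S))) :
  forall r : R,
    r < (\sum_(k < K.+1) f k) / inf (range (fun k : 'I_K => f (lift ord0 k))) ->
    exists (n : nat) (I0 : 'I_K -> 'I_n -> nat) (c : 'I_K.+1 -> 'I_n -> R)
           (S : seq ('I_n -> nat)),
      (forall k i, 0 <= c k i) /\
      ((r * OPT f I0 c S)%:E < ALG f P pol I0 c S)%E.
Proof.
move=> r r_lt; set F := \sum_(k < K.+1) f k.
have f_ge0 k : 0 <= f k by case: (unliftP ord0 k) => [k' ->|->] //; exact: ltW.
have [kst _ kst_min] := arg_minP (fun k : 'I_K => f (lift ord0 k)) (isT : predT (Ordinal hK)).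
have fm_gt0 := hf kst.
have fm_le : f (lift ord0 kst) <= F by rewrite /F (bigD1 (lift ord0 kst)) //= lerDl sumr_ge0.
have fm_le_inf : f (lift ord0 kst) <= inf (range (fun k : 'I_K => f (lift ord0 k))).
  by apply: lb_le_inf => [|_ [k _ <-]]; [exists (f (lift ord0 kst)), kst | exact: kst_min].
have r_lt' : r < F / f (lift ord0 kst).
  apply: lt_le_trans r_lt _; rewrite ler_wpM2l ?(le_trans (ltW fm_gt0)) //.
  by rewrite lef_pV2 ?posrE // (lt_le_trans fm_gt0).
have [thr [T gap]] := competitive_gap fm_gt0 fm_le r_lt'.
have c_ge0 (k : 'I_K.+1) (i : 'I_(n_items K T)) : 0 <= hard_cost F k i.
  by apply: hard_cost_ge0; exact: sumr_ge0.
pose bs := adversary_flags f kst P pol T thr.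
exists (n_items K T), (hard_stock kst), (hard_cost F), (hard_orders T kst bs); split => //.
have [nb_le ALG_ge] := adversary_cost_bounds (kst := kst) P thr f_ge0
  (fun w S => hvalid w _ _ _ S c_ge0) (fun S => hmeas _ _ _ S c_ge0).
apply: lt_le_trans ALG_ge; rewrite lte_fin; apply: gap => //.
- by rewrite cardC card_ord.
- exact: (OPT_ge0 f_ge0 c_ge0 (@offline_plan_feasible _ _ kst bs)).
- exact: OPT_hard_le.
Qed.
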